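(* Let $\mathbf m_1,\mathbf m_2,\mathbf m_3\in\mathbb R^3$ and $t_1,t_2,t_3,t_4\in\mathbb R$, and let $$\mathbf A_1=\begin{bmatrix}\mathbf m_1^T & t_1\\ \mathbf m_3^T & t_3\end{bmatrix},\qquad \mathbf A_2=\begin{bmatrix}\mathbf m_2^T & t_2\\ \mathbf m_3^T & t_4\end{bmatrix},$$ where $\mathbf m_1,\mathbf m_3$ are linearly independent and $\mathbf m_2,\mathbf m_3$ are linearly independent. Then there exist unique upper-triangular $2\times 2$ real matrices $\mathbf K_1,\mathbf K_2$ with positive diagonal entries, unique unit vectors $\mathbf r_1,\mathbf r_2,\mathbf r_3\in\mathbb R^3$ with $\mathbf r_3\cdot\mathbf r_1=\mathbf r_3\cdot\mathbf r_2=0$, and unique reals $t_1',t_2',t_3',t_4'$ such that $$\mathbf A_1=\mathbf K_1\begin{bmatrix}\mathbf r_1^T & t_1'\\ \mathbf r_3^T & t_3'\end{bmatrix},\qquad \mathbf A_2=\mathbf K_2\begin{bmatrix}\mathbf r_2^T & t_2'\\ \mathbf r_3^T & t_4'\end{bmatrix}.$$ Moreover, if in addition the null spaces of $\mathbf A_1$ and $\mathbf A_2$ (the two slits, viewed as lines in $\mathbb P^3$) are skew lines with finite points, then: the angle between the direction vectors $\mathbf r_1\times\mathbf r_3$ and $\mathbf r_2\times\mathbf r_3$ of the two slits is $\theta=\arccos(\mathbf r_1\cdot\mathbf r_2)$, and the euclidean distance between the two slits is $|t_4'-t_3'|$.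
   Context: A pair $(\mathbf A_1,\mathbf A_2)$ of $2\times 4$ matrices represents a two-slit camera $\mathbb P^3\dashrightarrow\mathbb P^2$, $\mathbf x\mapsto\big(\mathbf a_1^T\mathbf x/\mathbf a_2^T\mathbf x,\ \mathbf b_1^T\mathbf x/\mathbf b_2^T\mathbf x,\ 1\big)$, where $\mathbf a_1,\mathbf a_2$ are the rows of $\mathbf A_1$ and $\mathbf b_1,\mathbf b_2$ the rows of $\mathbf A_2$; its slits are the lines in $\mathbb P^3$ given by the null spaces of $\mathbf A_1$ and $\mathbf A_2$. A camera with matrices of the displayed form (sharing $\mathbf m_3$ in the second rows) is called a parallel two-slit camera. Points of $\mathbb R^3$ are identified with $(X_1,X_2,X_3,1)^T\in\mathbb P^3$ with the standard euclidean metric. *)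

From Stdlib Require Import Reals.
Open Scope R_scope.

Record vec3 := V3 { v1 : R; v2 : R; v3 : R }.

Definition vzero : vec3 := V3 0 0 0.
Definition vadd (u w : vec3) : vec3 := V3 (v1 u + v1 w) (v2 u + v2 w) (v3 u + v3 w).
Definition vscale (a : R) (u : vec3) : vec3 := V3 (a * v1 u) (a * v2 u) (a * v3 u).
Definition vsub (u w : vec3) : vec3 := vadd u (vscale (-1) w).
Definition dot (u w : vec3) : R := v1 u * v1 w + v2 u * v2 w + v3 u * v3 w.
Definition cross (u w : vec3) : vec3 :=
  V3 (v2 u * v3 w - v3 u * v2 w) (v3 u * v1 w - v1 u * v3 w) (v1 u * v2 w - v2 u * v1 w).
Definition vnorm (u : vec3) : R := sqrt (dot u u).

Definition lin_indep (u w : vec3) : Prop :=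
  forall a b : R, vadd (vscale a u) (vscale b w) = vzero -> a = 0 /\ b = 0.

Definition angle (u w : vec3) : R := acos (dot u w / (vnorm u * vnorm w)).

(* Points of R^4 (homogeneous coordinates of P^3): a vec3 part and a 4th coordinate. *)
Record vec4 := V4 { p3 : vec3; p4 : R }.

(* A 2x4 real matrix, given by its two rows; each row is [m^T t] with m in R^3. *)
Record mat24 := M24 { row1v : vec3; row1t : R; row2v : vec3; row2t : R }.

Definition mkA (m m3 : vec3) (t t' : R) : mat24 := M24 m t m3 t'.

Record mat22 := M22 { k11 : R; k12 : R; k21 : R; k22 : R }.

Definition upper_tri_posdiag (K : mat22) : Prop :=
  k21 K = 0 /\ 0 < k11 K /\ 0 < k22 K.

Definition mul22_24 (K : mat22) (M : mat24) : mat24 :=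
  M24 (vadd (vscale (k11 K) (row1v M)) (vscale (k12 K) (row2v M)))
      (k11 K * row1t M + k12 K * row2t M)
      (vadd (vscale (k21 K) (row1v M)) (vscale (k22 K) (row2v M)))
      (k21 K * row1t M + k22 K * row2t M).

Definition mat_apply (A : mat24) (x : vec4) : R * R :=
  (dot (row1v A) (p3 x) + row1t A * p4 x, dot (row2v A) (p3 x) + row2t A * p4 x).

(* Null space of A (the slit, as a line of P^3 = its set of nonzero representatives). *)
Definition in_null (A : mat24) (x : vec4) : Prop := mat_apply A x = (0, 0).

Definition v4nonzero (x : vec4) : Prop := p3 x <> vzero \/ p4 x <> 0.

(* The slits are skew lines of P^3: their null spaces meet only in 0. *)
Definition skew_slits (A1 A2 : mat24) : Prop :=
  forall x, in_null A1 x -> in_null A2 x -> ~ v4nonzero x.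

Definition has_finite_point (A : mat24) : Prop :=
  exists x, in_null A x /\ p4 x <> 0.

Definition on_slit (A : mat24) (X : vec3) : Prop := in_null A (V4 X 1).

Definition slit_distance (A1 A2 : mat24) (d : R) : Prop :=
  (forall X Y, on_slit A1 X -> on_slit A2 Y -> d <= vnorm (vsub X Y)) /\
  (forall e, (forall X Y, on_slit A1 X -> on_slit A2 Y -> e <= vnorm (vsub X Y)) -> e <= d).

Definition is_decomp (A1 A2 : mat24) (K1 K2 : mat22) (r1 r2 r3 : vec3)
    (t1' t2' t3' t4' : R) : Prop :=
  upper_tri_posdiag K1 /\ upper_tri_posdiag K2 /\
  vnorm r1 = 1 /\ vnorm r2 = 1 /\ vnorm r3 = 1 /\
  dot r3 r1 = 0 /\ dot r3 r2 = 0 /\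
  A1 = mul22_24 K1 (M24 r1 t1' r3 t3') /\
  A2 = mul22_24 K2 (M24 r2 t2' r3 t4').

(* The decomposition is the RQ (bottom-up Gram–Schmidt) factorization of the
   3-vector blocks of the rows: r3 is m3 normalized, which is the same for both
   cameras because they share the second row m3, and r_i is the normalized
   component of m_i orthogonal to r3.  Conversely, in any such factorization the
   second row forces k22 = |m3| and r3, and then the first row forces
   k12 = m_i.r3 and the rest, whence uniqueness.

   Since K_i is invertible, the slit of A_i is that of [r_i^T t; r3^T t'], so it
   lies in the plane r3.X + t' = 0.  Both slits lie in planes with the common
   unit normal r3, at distance |t4' - t3'|, which bounds the distance from
   below.  Skewness makes r1, r2, r3 a basis, so the point X of slit 1 with
   r2.X = -t2' exists, and moving it along r3 by t4' - t3' lands on slit 2: the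
   bound is attained.  The angle follows from the Binet–Cauchy identity. *)

From Stdlib Require Import Reals Lra.
Open Scope R_scope.

Lemma vec3_ext (u w : vec3) : v1 u = v1 w -> v2 u = v2 w -> v3 u = v3 w -> u = w.
Proof. destruct u, w; simpl; intros; subst; reflexivity. Qed.

Lemma dot_add_l (x y z : vec3) : dot (vadd x y) z = dot x z + dot y z.
Proof. unfold dot, vadd; simpl; ring. Qed.

Lemma dot_add_r (x y z : vec3) : dot z (vadd x y) = dot z x + dot z y.
Proof. unfold dot, vadd; simpl; ring. Qed.

Lemma dot_scale_l (k : R) (x z : vec3) : dot (vscale k x) z = k * dot x z.
Proof. unfold dot, vscale; simpl; ring. Qed.

Lemma dot_scale_r (k : R) (x z : vec3) : dot z (vscale k x) = k * dot z x.
Proof. unfold dot, vscale; simpl; ring. Qed.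

Lemma dot_comm (x y : vec3) : dot x y = dot y x.
Proof. unfold dot; ring. Qed.

Ltac dot_simpl :=
  unfold vsub in *;
  repeat rewrite ?dot_add_l, ?dot_add_r, ?dot_scale_l, ?dot_scale_r in *.

Lemma dot_self_nonneg (u : vec3) : 0 <= dot u u.
Proof. unfold dot; nra. Qed.

Lemma dot_self_eq0 (u : vec3) : dot u u = 0 -> u = vzero.
Proof. destruct u as [x y z]; unfold dot; simpl; intro H; apply vec3_ext; simpl; nra. Qed.

Lemma vnorm_eq (u : vec3) (d : R) : 0 <= d -> dot u u = d * d -> vnorm u = d.
Proof. intros Hd H; unfold vnorm; rewrite H; apply sqrt_square; exact Hd. Qed.

Lemma vnorm_eq1 (u : vec3) : vnorm u = 1 <-> dot u u = 1.
Proof.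
  split; intro H.
  - unfold vnorm in H. rewrite <- (sqrt_sqrt (dot u u)) by apply dot_self_nonneg.
    rewrite H; ring.
  - apply vnorm_eq; lra.
Qed.

Lemma vnorm_pos (u : vec3) : u <> vzero -> 0 < vnorm u /\ vnorm u * vnorm u = dot u u.
Proof.
  intro Hu; unfold vnorm; split.
  - apply sqrt_lt_R0. destruct (dot_self_nonneg u) as [H | H]; [exact H |].
    exfalso; apply Hu, dot_self_eq0; auto.
  - apply sqrt_sqrt, dot_self_nonneg.
Qed.

Lemma lagrange_identity (u w : vec3) :
  dot (cross u w) (cross u w) = dot u u * dot w w - dot u w * dot u w.
Proof. unfold dot, cross; simpl; ring. Qed.

Lemma binet_cauchy (a b c : vec3) :
  dot (cross a c) (cross b c) = dot a b * dot c c - dot a c * dot b c.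
Proof. unfold dot, cross; simpl; ring. Qed.

Lemma Rabs_dot_unit_le (u w : vec3) : dot w w = 1 -> Rabs (dot u w) <= vnorm u.
Proof.
  intro Hw. unfold vnorm. rewrite <- sqrt_Rsqr_abs. apply sqrt_le_1_alt. unfold Rsqr.
  pose proof (lagrange_identity u w). pose proof (dot_self_nonneg (cross u w)).
  rewrite Hw in *. nra.
Qed.

Lemma vnorm_scale_unit (a : R) (u : vec3) : dot u u = 1 -> vnorm (vscale a u) = Rabs a.
Proof.
  intro Hu. unfold vnorm. rewrite <- sqrt_Rsqr_abs. f_equal.
  dot_simpl. rewrite Hu. unfold Rsqr. ring.
Qed.

(* Cramer's rule, with the solution written through cross products. *)
Lemma dot_system_solvable (a b c : vec3) (p q s : R) :
  dot a (cross b c) <> 0 -> exists X, dot a X = p /\ dot b X = q /\ dot c X = s.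
Proof.
  intro HD.
  exists (vscale (/ dot a (cross b c))
            (vadd (vscale p (cross b c)) (vadd (vscale q (cross c a)) (vscale s (cross a b))))).
  unfold dot, cross, vscale, vadd in *; simpl in *.
  repeat split; field; exact HD.
Qed.

Definition orthonormal2 (u w : vec3) : Prop := dot u u = 1 /\ dot w w = 1 /\ dot w u = 0.

Lemma cross_orthonormal2 (u w : vec3) :
  orthonormal2 u w -> dot (cross u w) (cross u w) = 1.
Proof.
  intros [Hu [Hw Huw]]. rewrite lagrange_identity, Hu, Hw, dot_comm, Huw. ring.
Qed.

Lemma angle_cross_orthonormal2 (r1 r2 r3 : vec3) :
  orthonormal2 r1 r3 -> orthonormal2 r2 r3 ->
  angle (cross r1 r3) (cross r2 r3) = acos (dot r1 r2).
Proof.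
  intros H1 H2. unfold angle.
  rewrite (proj2 (vnorm_eq1 _) (cross_orthonormal2 _ _ H1)).
  rewrite (proj2 (vnorm_eq1 _) (cross_orthonormal2 _ _ H2)).
  destruct H1 as [_ [N3 O1]].
  rewrite binet_cauchy, N3, (dot_comm r1 r3), O1. f_equal. field.
Qed.

Definition normalize (u : vec3) : vec3 := vscale (/ vnorm u) u.

Definition gs_coef (m m3 : vec3) : R := dot m (normalize m3).

Definition gs_perp (m m3 : vec3) : vec3 := vsub m (vscale (gs_coef m m3) (normalize m3)).

Definition rq_K (A : mat24) : mat22 :=
  M22 (vnorm (gs_perp (row1v A) (row2v A))) (gs_coef (row1v A) (row2v A)) 0 (vnorm (row2v A)).

Definition rq_Q (A : mat24) : mat24 :=
  M24 (normalize (gs_perp (row1v A) (row2v A)))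
      ((row1t A - gs_coef (row1v A) (row2v A) * (row2t A / vnorm (row2v A)))
         / vnorm (gs_perp (row1v A) (row2v A)))
      (normalize (row2v A))
      (row2t A / vnorm (row2v A)).

Definition is_rq (A : mat24) (K : mat22) (Q : mat24) : Prop :=
  upper_tri_posdiag K /\ orthonormal2 (row1v Q) (row2v Q) /\ A = mul22_24 K Q.

Lemma rq_exists (A : mat24) : lin_indep (row1v A) (row2v A) -> is_rq A (rq_K A) (rq_Q A).
Proof.
  destruct A as [m t m3 t3]; simpl. intro Hl.
  assert (N3 : m3 <> vzero).
  { intro E. destruct (Hl 0 1) as [_ H]; [| lra]. subst m3. apply vec3_ext; simpl; ring. }
  destruct (vnorm_pos _ N3) as [Hn Hnn].
  assert (R3 : dot (normalize m3) (normalize m3) = 1).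
  { unfold normalize; dot_simpl. rewrite <- Hnn. field; lra. }
  assert (NW : gs_perp m m3 <> vzero).
  { intro E. destruct (Hl 1 (- gs_coef m m3 / vnorm m3)) as [H _]; [| lra].
    unfold gs_perp, normalize, vsub in E. apply vec3_ext; simpl.
    - apply (f_equal v1) in E; simpl in E. rewrite <- E. field; lra.
    - apply (f_equal v2) in E; simpl in E. rewrite <- E. field; lra.
    - apply (f_equal v3) in E; simpl in E. rewrite <- E. field; lra. }
  destruct (vnorm_pos _ NW) as [Ha Haa].
  assert (W3 : dot (normalize m3) (gs_perp m m3) = 0).
  { unfold gs_perp at 1; dot_simpl. rewrite R3. unfold gs_coef. rewrite dot_comm. ring. }
  unfold is_rq, orthonormal2, upper_tri_posdiag, rq_K, rq_Q; simpl.
  repeat split; try lra.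
  - unfold normalize at 1 2; dot_simpl. rewrite <- Haa. field; lra.
  - unfold normalize at 2; dot_simpl. rewrite W3; ring.
  - unfold mul22_24; simpl. f_equal.
    + unfold normalize. set (a := vnorm (gs_perp m m3)) in *.
      unfold gs_perp, vsub. apply vec3_ext; simpl; field; lra.
    + field; lra.
    + unfold normalize. apply vec3_ext; simpl; field; lra.
    + field; lra.
Qed.

Lemma rq_unique (A : mat24) (K : mat22) (Q : mat24) :
  is_rq A K Q -> K = rq_K A /\ Q = rq_Q A.
Proof.
  destruct K as [a b c d], Q as [r t r3 t3].
  unfold is_rq, orthonormal2, upper_tri_posdiag; simpl.
  intros [[Hc [Ha Hd]] [[Hr [Hr3 H0]] ->]]. subst c.
  unfold rq_K, rq_Q, mul22_24; simpl.
  assert (E3 : vnorm (vadd (vscale 0 r) (vscale d r3)) = d).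
  { apply vnorm_eq; [lra |]. dot_simpl. rewrite (dot_comm r r3), H0, Hr3, Hr. ring. }
  assert (R3 : normalize (vadd (vscale 0 r) (vscale d r3)) = r3).
  { unfold normalize; rewrite E3. apply vec3_ext; simpl; field; lra. }
  assert (B : gs_coef (vadd (vscale a r) (vscale b r3)) (vadd (vscale 0 r) (vscale d r3)) = b).
  { unfold gs_coef; rewrite R3. dot_simpl. rewrite (dot_comm r r3), H0, Hr3. ring. }
  assert (W : gs_perp (vadd (vscale a r) (vscale b r3)) (vadd (vscale 0 r) (vscale d r3))
              = vscale a r).
  { unfold gs_perp; rewrite B, R3. apply vec3_ext; simpl; ring. }
  assert (EW : vnorm (vscale a r) = a).
  { apply vnorm_eq; [lra |]. dot_simpl. rewrite Hr. ring. }
  rewrite W, EW, B, E3, R3. split; f_equal.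
  - unfold normalize. rewrite EW. apply vec3_ext; simpl; field; lra.
  - field; lra.
  - field; lra.
Qed.

Lemma is_decomp_iff_rq (A1 A2 : mat24) (K1 K2 : mat22) (r1 r2 r3 : vec3) (t1 t2 t3 t4 : R) :
  is_decomp A1 A2 K1 K2 r1 r2 r3 t1 t2 t3 t4 <->
  is_rq A1 K1 (M24 r1 t1 r3 t3) /\ is_rq A2 K2 (M24 r2 t2 r3 t4).
Proof.
  unfold is_decomp, is_rq, orthonormal2; simpl. rewrite !vnorm_eq1. tauto.
Qed.

Definition det22 (K : mat22) : R := k11 K * k22 K - k12 K * k21 K.

Lemma upper_tri_posdiag_det22 (K : mat22) : upper_tri_posdiag K -> det22 K <> 0.
Proof.
  destruct K as [a b c d]; unfold upper_tri_posdiag, det22; simpl.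
  intros [-> [Ha Hd]]. nra.
Qed.

Lemma in_null_M24 (r : vec3) (t : R) (r3 : vec3) (t3 : R) (x : vec4) :
  in_null (M24 r t r3 t3) x <->
  dot r (p3 x) + t * p4 x = 0 /\ dot r3 (p3 x) + t3 * p4 x = 0.
Proof.
  unfold in_null, mat_apply; simpl. split.
  - intro H; injection H; auto.
  - intros [-> ->]; reflexivity.
Qed.

Lemma in_null_mul22_24 (K : mat22) (M : mat24) :
  det22 K <> 0 -> forall x, in_null (mul22_24 K M) x <-> in_null M x.
Proof.
  destruct K as [a b c d], M as [r t r3 t3]; unfold det22; simpl. intros HK x.
  unfold mul22_24; simpl. rewrite !in_null_M24. dot_simpl.
  set (u := dot r (p3 x) + t * p4 x). set (v := dot r3 (p3 x) + t3 * p4 x).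
  replace (a * dot r (p3 x) + b * dot r3 (p3 x) + (a * t + b * t3) * p4 x)
    with (a * u + b * v) by (unfold u, v; ring).
  replace (c * dot r (p3 x) + d * dot r3 (p3 x) + (c * t + d * t3) * p4 x)
    with (c * u + d * v) by (unfold u, v; ring).
  split.
  - intros [E1 E2].
    assert (Hu : u * (a * d - b * c) = 0).
    { replace (u * (a * d - b * c)) with (d * (a * u + b * v) - b * (c * u + d * v)) by ring.
      rewrite E1, E2; ring. }
    assert (Hv : v * (a * d - b * c) = 0).
    { replace (v * (a * d - b * c)) with (a * (c * u + d * v) - c * (a * u + b * v)) by ring.
      rewrite E1, E2; ring. }
    apply Rmult_integral in Hu, Hv. split; tauto.
  - intros [-> ->]. split; ring.
Qed.

Lemma skew_slits_mul22_24 (K1 K2 : mat22) (M1 M2 : mat24) :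
  det22 K1 <> 0 -> det22 K2 <> 0 ->
  skew_slits (mul22_24 K1 M1) (mul22_24 K2 M2) <-> skew_slits M1 M2.
Proof.
  intros H1 H2. unfold skew_slits.
  setoid_rewrite (in_null_mul22_24 K1 M1 H1). setoid_rewrite (in_null_mul22_24 K2 M2 H2).
  reflexivity.
Qed.

Lemma slit_distance_mul22_24 (K1 K2 : mat22) (M1 M2 : mat24) (d : R) :
  det22 K1 <> 0 -> det22 K2 <> 0 ->
  slit_distance (mul22_24 K1 M1) (mul22_24 K2 M2) d <-> slit_distance M1 M2 d.
Proof.
  intros H1 H2. unfold slit_distance, on_slit.
  setoid_rewrite (in_null_mul22_24 K1 M1 H1). setoid_rewrite (in_null_mul22_24 K2 M2 H2).
  reflexivity.
Qed.

(* If r1, r2, r3 were coplanar, the point at infinity in direction r1 x r3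
   would lie on both slits. *)
Lemma skew_slits_triple_product (r1 r2 r3 : vec3) (t1 t2 t3 t4 : R) :
  orthonormal2 r1 r3 -> skew_slits (M24 r1 t1 r3 t3) (M24 r2 t2 r3 t4) ->
  dot r1 (cross r2 r3) <> 0.
Proof.
  intros H13 Hs HD. apply (Hs (V4 (cross r1 r3) 0)).
  - apply in_null_M24; simpl. unfold dot, cross; simpl; split; ring.
  - apply in_null_M24; simpl. split.
    + transitivity (- dot r1 (cross r2 r3)); [unfold dot, cross; simpl; ring | rewrite HD; ring].
    + unfold dot, cross; simpl; ring.
  - left; simpl. intro E. pose proof (cross_orthonormal2 _ _ H13) as U.
    rewrite E in U. unfold dot in U; simpl in U. lra.
Qed.

Lemma slit_distance_parallel (r1 r2 r3 : vec3) (t1 t2 t3 t4 : R) :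
  dot r3 r3 = 1 -> dot r3 r2 = 0 -> dot r1 (cross r2 r3) <> 0 ->
  slit_distance (M24 r1 t1 r3 t3) (M24 r2 t2 r3 t4) (Rabs (t4 - t3)).
Proof.
  intros N3 O2 HD. unfold slit_distance, on_slit. split.
  - intros X Y H1 H2. rewrite in_null_M24 in H1, H2; simpl in H1, H2.
    replace (t4 - t3) with (dot (vsub X Y) r3).
    + apply Rabs_dot_unit_le; exact N3.
    + dot_simpl. rewrite (dot_comm X r3), (dot_comm Y r3). lra.
  - intros e He.
    destruct (dot_system_solvable r1 r2 r3 (- t1) (- t2) (- t3) HD) as [X [X1 [X2 X3]]].
    set (Y := vsub X (vscale (t4 - t3) r3)).
    assert (XY : vsub X Y = vscale (t4 - t3) r3) by (apply vec3_ext; simpl; ring).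
    rewrite <- (vnorm_scale_unit (t4 - t3) r3 N3), <- XY.
    apply He; apply in_null_M24; simpl.
    + lra.
    + unfold Y; dot_simpl. rewrite X2, X3, (dot_comm r2 r3), O2, N3. split; ring.
Qed.

Theorem mainTheorem2 (m1 m2 m3 : vec3) (t1 t2 t3 t4 : R)
  (h13 : lin_indep m1 m3) (h23 : lin_indep m2 m3) :
  let A1 := mkA m1 m3 t1 t3 in
  let A2 := mkA m2 m3 t2 t4 in
  (* existence and uniqueness of the decomposition *)
  (exists K1 K2 r1 r2 r3 t1' t2' t3' t4',
     is_decomp A1 A2 K1 K2 r1 r2 r3 t1' t2' t3' t4' /\
     forall K1b K2b r1b r2b r3b t1b t2b t3b t4b,
       is_decomp A1 A2 K1b K2b r1b r2b r3b t1b t2b t3b t4b ->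
       K1b = K1 /\ K2b = K2 /\ r1b = r1 /\ r2b = r2 /\ r3b = r3 /\
       t1b = t1' /\ t2b = t2' /\ t3b = t3' /\ t4b = t4') /\
  (* geometric meaning, for skew slits with finite points *)
  (forall K1 K2 r1 r2 r3 t1' t2' t3' t4',
     is_decomp A1 A2 K1 K2 r1 r2 r3 t1' t2' t3' t4' ->
     skew_slits A1 A2 -> has_finite_point A1 -> has_finite_point A2 ->
     angle (cross r1 r3) (cross r2 r3) = acos (dot r1 r2) /\
     slit_distance A1 A2 (Rabs (t4' - t3'))).
Proof.
  intros A1 A2. split.
  - pose proof (rq_exists A1 h13) as E1. pose proof (rq_exists A2 h23) as E2.
    pose proof (rq_unique A1) as U1. pose proof (rq_unique A2) as U2.
    (* both cameras share the second row m3, hence the same r3 *)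
    change (rq_Q A2) with (M24 (row1v (rq_Q A2)) (row1t (rq_Q A2))
                              (row2v (rq_Q A1)) (row2t (rq_Q A2))) in E2, U2.
    destruct (rq_Q A1) as [r1 t1' r3 t3'], (rq_Q A2) as [r2 t2' r3' t4']; simpl in *.
    exists (rq_K A1), (rq_K A2), r1, r2, r3, t1', t2', t3', t4'.
    split; [apply is_decomp_iff_rq; auto |].
    intros K1b K2b r1b r2b r3b t1b t2b t3b t4b [H1 H2]%is_decomp_iff_rq.
    destruct (U1 _ _ H1) as [-> Q1], (U2 _ _ H2) as [-> Q2].
    injection Q1; injection Q2; intros; subst; repeat split.
  - (* skewness alone forces finite points *)
    intros K1 K2 r1 r2 r3 t1' t2' t3' t4' Hd Hs _ _.
    apply is_decomp_iff_rq in Hd as [[HK1 [O13 E1]] [HK2 [O23 E2]]]; simpl in O13, O23.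
    pose proof (upper_tri_posdiag_det22 _ HK1) as D1.
    pose proof (upper_tri_posdiag_det22 _ HK2) as D2.
    rewrite E1, E2 in Hs |- *. rewrite skew_slits_mul22_24 in Hs by assumption.
    split; [apply angle_cross_orthonormal2; assumption |].
    apply slit_distance_mul22_24; try assumption.
    destruct O23 as [_ [N3 O2]].
    apply slit_distance_parallel; try assumption.
    apply (skew_slits_triple_product r1 r2 r3 t1' t2' t3' t4'); assumption.
Qed.
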